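(* In the setting where $\alpha\in(0,1)$ satisfies $\frac{1-\alpha}{1+\alpha}<\alpha^{1/2}$ and two boxes are given by $w_k=W_0/\alpha^{i+i_k}$, $h_k=H_0/\alpha^{j+j_k}$, $x_k=b_x\delta_i+(m+m_k)\delta_i$, $y_k=b_y\delta_j+(n+n_k)\delta_j$ ($k=1,2$) with $\delta_i=\frac{W_0}{\alpha^{i}}\frac{1-\alpha}{1+\alpha}$, $\delta_j=\frac{H_0}{\alpha^{j}}\frac{1-\alpha}{1+\alpha}$ and all offsets $i_k,j_k,m_k,n_k\in[-\tfrac12,\tfrac12]$: if all variables other than $i_1$ are held fixed, then the minimum of the IoU of the two boxes over $i_1\in[-\tfrac12,\tfrac12]$ is attained at $i_1=-\tfrac12$ or $i_1=\tfrac12$. *)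

From Stdlib Require Import Reals ZArith.
Open Scope R_scope.

Definition overlap (c1 l1 c2 l2 : R) : R :=
  Rmax 0 (Rmin (c1 + l1 / 2) (c2 + l2 / 2) - Rmax (c1 - l1 / 2) (c2 - l2 / 2)).

Definition iou (x1 y1 w1 h1 x2 y2 w2 h2 : R) : R :=
  let I := overlap x1 w1 x2 w2 * overlap y1 h1 y2 h2 in
  I / (w1 * h1 + w2 * h2 - I).

Definition side (L0 alpha e : R) : R := L0 / Rpower alpha e.

Definition step (L0 alpha i : R) : R :=
  L0 / Rpower alpha i * ((1 - alpha) / (1 + alpha)).

Definition box_pair_iou (alpha W0 H0 bx by_ : R) (i j m n : Z)
    (i1 j1 m1 n1 i2 j2 m2 n2 : R) : R :=
  let di := step W0 alpha (IZR i) in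
  let dj := step H0 alpha (IZR j) in
  iou (bx * di + (IZR m + m1) * di) (by_ * dj + (IZR n + n1) * dj)
      (side W0 alpha (IZR i + i1)) (side H0 alpha (IZR j + j1))
      (bx * di + (IZR m + m2) * di) (by_ * dj + (IZR n + n2) * dj)
      (side W0 alpha (IZR i + i2)) (side H0 alpha (IZR j + j2)).

Definition in_half (t : R) : Prop := -(1/2) <= t <= 1/2.

From Stdlib Require Import Reals ZArith Lra Psatz.
Open Scope R_scope.

(* Only the width w1 = W0 / alpha^(i+i1) of the first box
   depends on i1, and it is an increasing function of i1, so i1 in
   [-1/2, 1/2] sweeps the width over the interval between the two endpoint
   widths.  It therefore suffices that the IoU is quasi-concave in the width
   of the first box: its value at an intermediate width is at least the
   smaller of its values at the two ends.
   For fixed centres the horizontal overlap is max(0, g(w)) with g concave in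
   w (a minimum of affine functions minus a maximum of affine functions).
   If both endpoint IoU values are >= t > 0, the overlaps there are positive,
   hence equal to g, and the superlevel condition t <= IoU is equivalent to
   the nonnegativity of the concave function (1+t) K g(w) - t (w h + A);
   concavity propagates it to intermediate widths. *)

Definition concave_at (f : R -> R) (w1 w w2 : R) : Prop :=
  (w2 - w) * f w1 + (w - w1) * f w2 <= (w2 - w1) * f w.

Lemma concave_at_nonneg (f : R -> R) (w1 w w2 : R) :
  w1 <= w <= w2 -> concave_at f w1 w w2 -> 0 <= f w1 -> 0 <= f w2 -> 0 <= f w.
Proof.
  unfold concave_at; intros Hw Hc H1 H2.
  destruct (Req_dec w1 w2).
  - replace w with w1 by lra; exact H1.
  - assert (0 <= (w2 - w1) * f w) by nra.
    destruct (Rle_dec 0 (f w)); [assumption | nra].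
Qed.

Lemma concave_at_scale_sub_affine (f : R -> R) (p q r w1 w w2 : R) :
  0 <= p -> concave_at f w1 w w2 ->
  concave_at (fun v => p * f v - (q * v + r)) w1 w w2.
Proof. unfold concave_at; intros Hp Hc; nra. Qed.

Lemma Rmin_right_end_concave (c U : R) (w1 w w2 : R) :
  w1 <= w <= w2 -> concave_at (fun v => Rmin (c + v / 2) U) w1 w w2.
Proof.
  unfold concave_at, Rmin; intros H.
  destruct (Rle_dec (c + w1 / 2) U); destruct (Rle_dec (c + w2 / 2) U);
    destruct (Rle_dec (c + w / 2) U); nra.
Qed.

Lemma Rmax_left_end_convex (c L : R) (w1 w w2 : R) :
  w1 <= w <= w2 ->
  concave_at (fun v => - Rmax (c - v / 2) L) w1 w w2.
Proof.
  unfold concave_at, Rmax; intros H.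
  destruct (Rle_dec (c - w1 / 2) L); destruct (Rle_dec (c - w2 / 2) L);
    destruct (Rle_dec (c - w / 2) L); nra.
Qed.

Definition signed_overlap (c l c2 l2 : R) : R :=
  Rmin (c + l / 2) (c2 + l2 / 2) - Rmax (c - l / 2) (c2 - l2 / 2).

Lemma overlap_clip (c l c2 l2 : R) :
  overlap c l c2 l2 = Rmax 0 (signed_overlap c l c2 l2).
Proof. reflexivity. Qed.

Lemma signed_overlap_concave (c c2 l2 w1 w w2 : R) :
  w1 <= w <= w2 -> concave_at (fun v => signed_overlap c v c2 l2) w1 w w2.
Proof.
  intros H.
  pose proof (Rmin_right_end_concave c (c2 + l2 / 2) w1 w w2 H) as Hmin.
  pose proof (Rmax_left_end_convex c (c2 - l2 / 2) w1 w w2 H) as Hmax.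
  unfold concave_at, signed_overlap in *; lra.
Qed.

Lemma overlap_pos_signed (c l c2 l2 : R) :
  0 < overlap c l c2 l2 -> overlap c l c2 l2 = signed_overlap c l c2 l2.
Proof.
  rewrite overlap_clip; unfold Rmax.
  destruct (Rle_dec 0 (signed_overlap c l c2 l2)); lra.
Qed.

Lemma overlap_bounds (c l c2 l2 : R) : 0 < l -> 0 <= overlap c l c2 l2 <= l.
Proof.
  intros Hl; unfold overlap; split; [apply Rmax_l |].
  apply Rmax_lub; [lra |].
  pose proof (Rmin_l (c + l / 2) (c2 + l2 / 2)).
  pose proof (Rmax_l (c - l / 2) (c2 - l2 / 2)); lra.
Qed.

Lemma le_div_iff (t a d : R) : 0 < d -> t <= a / d <-> t * d <= a.
Proof.
  intros Hd; split; intros H.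
  - apply Rmult_le_compat_r with (r := d) in H; [| lra].
    unfold Rdiv in H; rewrite Rmult_assoc, Rinv_l, Rmult_1_r in H by lra; exact H.
  - apply Rmult_le_reg_r with d; [exact Hd |].
    unfold Rdiv; rewrite Rmult_assoc, Rinv_l, Rmult_1_r by lra; exact H.
Qed.

(* Quasi-concavity of the IoU in the width v of the first box, written with
   the vertical overlap K (0 <= K <= h), the first height h and the area A of
   the second box abstracted: I(v) = o(v) K / (v h + A - o(v) K). *)
Section IouInWidth.

Variables (c c2 l2 K h A : R).
Hypotheses (Hh : 0 < h) (HK : 0 <= K <= h) (HA : 0 < A).

Let ov (v : R) : R := overlap c v c2 l2 * K.
Let union (v : R) : R := v * h + A - ov v.

Lemma union_pos (v : R) : 0 < v -> 0 < union v.
Proof.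
  intros Hv; unfold union, ov.
  pose proof (overlap_bounds c v c2 l2 Hv); nra.
Qed.

Lemma iou_superlevel (t v : R) :
  0 < v -> t <= ov v / union v <-> t * (v * h + A) <= (1 + t) * ov v.
Proof.
  intros Hv; rewrite le_div_iff by (apply union_pos; exact Hv).
  unfold union; split; lra.
Qed.

Lemma iou_width_quasiconcave (w1 w w2 : R) :
  0 < w1 -> w1 <= w <= w2 ->
  Rmin (ov w1 / union w1) (ov w2 / union w2) <= ov w / union w.
Proof.
  intros Hw1 Hw.
  assert (Hw0 : 0 < w) by lra; assert (Hw2 : 0 < w2) by lra.
  set (t := Rmin _ _).
  destruct (Rle_dec t 0) as [Ht | Ht].
  { apply Rle_trans with 0; [exact Ht |].
    pose proof (overlap_bounds c w c2 l2 Hw0).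
    apply le_div_iff; [apply union_pos; exact Hw0 | unfold ov; nra]. }
  apply Rnot_le_lt in Ht.
  apply (iou_superlevel t w Hw0).
  assert (T1 : t * (w1 * h + A) <= (1 + t) * ov w1)
    by (apply iou_superlevel; [exact Hw1 | apply Rmin_l]).
  assert (T2 : t * (w2 * h + A) <= (1 + t) * ov w2)
    by (apply iou_superlevel; [exact Hw2 | apply Rmin_r]).
  (* At both ends the IoU is positive, so the overlap there is unclipped. *)
  assert (E1 : overlap c w1 c2 l2 = signed_overlap c w1 c2 l2).
  { pose proof (overlap_bounds c w1 c2 l2 Hw1).
    assert (0 < t * (w1 * h + A)) by (apply Rmult_lt_0_compat; nra).
    apply overlap_pos_signed; unfold ov in T1.
    destruct (Req_dec (overlap c w1 c2 l2) 0) as [Z | Z]; [| lra].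
    rewrite Z in T1; lra. }
  assert (E2 : overlap c w2 c2 l2 = signed_overlap c w2 c2 l2).
  { pose proof (overlap_bounds c w2 c2 l2 Hw2).
    assert (0 < t * (w2 * h + A)) by (apply Rmult_lt_0_compat; nra).
    apply overlap_pos_signed; unfold ov in T2.
    destruct (Req_dec (overlap c w2 c2 l2) 0) as [Z | Z]; [| lra].
    rewrite Z in T2; lra. }
  (* phi(v) = (1+t) K g(v) - t (v h + A) is concave and >= 0 at the ends. *)
  set (phi := fun v => ((1 + t) * K) * signed_overlap c v c2 l2
                       - ((t * h) * v + t * A)).
  assert (Hphi : 0 <= phi w).
  { apply (concave_at_nonneg phi w1 w w2 Hw).
    - apply concave_at_scale_sub_affine; [nra |].
      apply signed_overlap_concave; exact Hw.
    - unfold phi, ov in *; rewrite <- E1; nra.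
    - unfold phi, ov in *; rewrite <- E2; nra. }
  assert (G : signed_overlap c w c2 l2 <= overlap c w c2 l2)
    by (rewrite overlap_clip; apply Rmax_r).
  assert (((1 + t) * K) * signed_overlap c w c2 l2
          <= ((1 + t) * K) * overlap c w c2 l2)
    by (apply Rmult_le_compat_l; nra).
  unfold phi in Hphi; unfold ov; lra.
Qed.

End IouInWidth.

Lemma iou_quasiconcave_first_width (x1 y1 h1 x2 y2 w2 h2 v1 v v2 : R) :
  0 < h1 -> 0 < w2 -> 0 < h2 -> 0 < v1 -> v1 <= v <= v2 ->
  Rmin (iou x1 y1 v1 h1 x2 y2 w2 h2) (iou x1 y1 v2 h1 x2 y2 w2 h2)
  <= iou x1 y1 v h1 x2 y2 w2 h2.
Proof.
  intros Hh1 Hw2 Hh2 Hv1 Hv; unfold iou.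
  apply iou_width_quasiconcave; auto; [| nra].
  apply overlap_bounds; exact Hh1.
Qed.

Lemma side_pos (L0 a e : R) : 0 < L0 -> 0 < side L0 a e.
Proof. intros; unfold side, Rpower; apply Rdiv_lt_0_compat; [lra | apply exp_pos]. Qed.

Lemma side_mono (L0 a e e' : R) :
  0 < L0 -> 0 < a < 1 -> e <= e' -> side L0 a e <= side L0 a e'.
Proof.
  intros HL Ha He; unfold side, Rpower.
  assert (ln a < 0) by (rewrite <- ln_1; apply ln_increasing; lra).
  assert (exp (e' * ln a) <= exp (e * ln a)).
  { destruct (Req_dec e e') as [-> |]; [lra |].
    left; apply exp_increasing; nra. }
  pose proof (exp_pos (e' * ln a)); pose proof (exp_pos (e * ln a)).
  unfold Rdiv; apply Rmult_le_compat_l; [lra |].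
  apply Rinv_le_contravar; lra.
Qed.

Lemma min_at_endpoint (g : R -> R) (a b : R) :
  (forall e, a <= e <= b -> Rmin (g a) (g b) <= g e) ->
  exists e0, (e0 = a \/ e0 = b) /\ forall e, a <= e <= b -> g e0 <= g e.
Proof.
  intros Hg; destruct (Rle_dec (g a) (g b)) as [Hab | Hab].
  - exists a; split; [left; reflexivity |].
    intros e He; rewrite <- (Rmin_left _ _ Hab); exact (Hg e He).
  - exists b; split; [right; reflexivity |].
    intros e He; rewrite <- (Rmin_right (g a) (g b)) by lra; exact (Hg e He).
Qed.

Theorem lemma2 (alpha W0 H0 bx by_ : R) (i j m n : Z)
    (j1 m1 n1 i2 j2 m2 n2 : R) :
  0 < alpha < 1 ->
  (1 - alpha) / (1 + alpha) < sqrt alpha ->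
  0 < W0 -> 0 < H0 ->
  in_half j1 -> in_half m1 -> in_half n1 ->
  in_half i2 -> in_half j2 -> in_half m2 -> in_half n2 ->
  exists e : R, (e = -(1/2) \/ e = 1/2) /\
    forall i1 : R, in_half i1 ->
      box_pair_iou alpha W0 H0 bx by_ i j m n e j1 m1 n1 i2 j2 m2 n2
      <= box_pair_iou alpha W0 H0 bx by_ i j m n i1 j1 m1 n1 i2 j2 m2 n2.
Proof.
  intros Ha _ HW HH _ _ _ _ _ _ _.
  apply min_at_endpoint; intros i1 Hi1.
  (* The IoU depends on i1 only through the first width, which increases
     with i1; quasi-concavity in that width gives the endpoint bound. *)
  unfold box_pair_iou; apply iou_quasiconcave_first_width;
    try (apply side_pos; assumption); try (split; apply side_mono); lra.
Qed.
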